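(* For every $n\in\mathbb{N}$ there exists a map $\bar\Gamma\to\Gamma$, $f\mapsto\varphi_n^f$, such that $\varphi_n^{f+n^{-1}\lfloor nc\rfloor}=\varphi_n^f+\lfloor nc\rfloor$ for all $c\in\mathbb{R}$ and $f\in\bar\Gamma$, and $$\sup_{(x,y)\in\mathbb{R}^2}\Big|\tfrac1n\varphi_n^f(nx,\lfloor ny\rfloor)-f(x,y)\Big|\le\frac2n .$$
   Context: $\Gamma$ is the set of functions $h:\mathbb{R}\times\mathbb{Z}\to\mathbb{Z}$ such that (i) for every $y\in\mathbb{Z}$, $x\mapsto h(x,y)$ is piecewise constant with a locally finite set of jumps, each of size $\pm1$, and is upper semicontinuous; (ii) for every $x\in\mathbb{R}$, $y\in\mathbb{Z}$, $h(x,y+1)-h(x,y)\in\{-1,0\}$. $\bar\Gamma$ is the set of continuous $f:\mathbb{R}^2\to\mathbb{R}$ with $f(x,y_2)-f(x,y_1)\in[-(y_2-y_1),0]$ for all $x\in\mathbb{R}$ and $y_1\le y_2$. *)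

From Stdlib Require Import Reals ZArith Lra.
From Coquelicot Require Import Coquelicot.
Open Scope R_scope.

Definition zfloor (r : R) : Z := Int_part r.

(* Piecewise constant with locally finite jumps, each of size +-1:
   around every point x, g is constant (value L) on a left punctured
   neighbourhood and constant (value R') on a right punctured neighbourhood,
   the two values differ by at most 1 (a jump of size +-1 or no jump), and
   the value at x is one of them. *)
Definition pw_const_unit_jumps (g : R -> Z) : Prop :=
  forall x : R, exists (eps : R) (L Rv : Z), 0 < eps /\
    (forall x', x - eps < x' < x -> g x' = L) /\
    (forall x', x < x' < x + eps -> g x' = Rv) /\
    (Z.abs (L - Rv) <= 1)%Z /\
    (g x = L \/ g x = Rv).

Definition usc (g : R -> Z) : Prop :=
  forall (x t : R), IZR (g x) < t ->
    exists delta, 0 < delta /\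
      forall x', Rabs (x' - x) < delta -> IZR (g x') < t.

Definition Gamma (h : R -> Z -> Z) : Prop :=
  (forall y : Z, pw_const_unit_jumps (fun x => h x y) /\ usc (fun x => h x y)) /\
  (forall (x : R) (y : Z), (h x (y + 1) - h x y = -1 \/ h x (y + 1) - h x y = 0)%Z).

Definition Gammabar (f : R -> R -> R) : Prop :=
  (forall x y : R, continuity_2d_pt f x y) /\
  (forall x y1 y2 : R, y1 <= y2 ->
     - (y2 - y1) <= f x y2 - f x y1 <= 0).

From Stdlib Require Import Reals ZArith Lra Lia ClassicalEpsilon FunctionalExtensionality.
From Coquelicot Require Import Coquelicot.
Open Scope R_scope.

(* The rows [c_k x = n f(x/n, k/n) - 1/2] are continuous and satisfy
   [c_k - 1 <= c_(k+1) <= c_k].  Sampling [c_k] on a grid fine enough for its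
   uniform continuity on each unit interval and rounding gives a right-continuous
   integer step function with unit jumps within 1 of [c_k].  Clamping these
   successively outwards from row 0 so that consecutive rows differ by 0 or -1
   keeps the bound (the [c_k] are coupled the same way), and replacing each
   value by the maximum of itself and its left limit makes every row upper
   semicontinuous at a cost below 1/2.  Since [n f(x, y)] is within 1/2 of [c_(floor (n y)) (n x)], the total
   error is below 2.  Equivariance is obtained by subtracting
   [floor (n f(0,0)) / n] before the construction and adding it back after. *)

Lemma zfloor_spec r : IZR (zfloor r) <= r < IZR (zfloor r) + 1.
Proof. unfold zfloor. destruct (base_Int_part r). lra. Qed.

Lemma zfloor_unique k r : IZR k <= r < IZR k + 1 -> zfloor r = k.
Proof. intros H. symmetry. apply Int_part_spec. lra. Qed.

Lemma zfloor_IZR k : zfloor (IZR k) = k.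
Proof. apply zfloor_unique. lra. Qed.

Lemma zfloor_add_IZR r k : zfloor (r + IZR k) = (zfloor r + k)%Z.
Proof. apply zfloor_unique. rewrite plus_IZR. pose proof (zfloor_spec r). lra. Qed.

Lemma zfloor_le r s : r <= s -> (zfloor r <= zfloor s)%Z.
Proof.
  intros H. destruct (zfloor_spec r), (zfloor_spec s).
  assert (Hlt : IZR (zfloor r) < IZR (zfloor s + 1)) by (rewrite plus_IZR; lra).
  apply lt_IZR in Hlt. lia.
Qed.

Lemma zfloor_unit_gap r s : Rabs (r - s) <= 1 -> (Z.abs (zfloor r - zfloor s) <= 1)%Z.
Proof.
  intros H. apply Rabs_le_between' in H.
  assert (Hr : (zfloor r <= zfloor (s + IZR 1))%Z) by (apply zfloor_le; simpl; lra).
  assert (Hs : (zfloor s <= zfloor (r + IZR 1))%Z) by (apply zfloor_le; simpl; lra).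
  rewrite zfloor_add_IZR in Hr, Hs. lia.
Qed.

Lemma zfloor_scaled_right M x : 0 < M ->
  exists eps, 0 < eps /\ forall x', x <= x' < x + eps -> zfloor (M * x') = zfloor (M * x).
Proof.
  intros HM. destruct (zfloor_spec (M * x)) as [H1 H2].
  exists ((IZR (zfloor (M * x)) + 1 - M * x) / M). split.
  - apply Rdiv_lt_0_compat; lra.
  - intros x' Hx'. apply zfloor_unique.
    assert (Hlt : M * x' < M * (x + (IZR (zfloor (M * x)) + 1 - M * x) / M))
      by (apply Rmult_lt_compat_l; lra).
    replace (M * (x + (IZR (zfloor (M * x)) + 1 - M * x) / M))
      with (IZR (zfloor (M * x)) + 1) in Hlt by (field; lra).
    nra.
Qed.

Lemma zfloor_scaled_left M x : 0 < M ->
  exists eps k, 0 < eps /\ forall x', x - eps < x' < x -> zfloor (M * x') = k.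
Proof.
  intros HM. destruct (zfloor_spec (M * x)) as [H1 H2].
  assert (Hgap : exists d k, 0 < d /\ IZR k <= M * x - d /\ M * x <= IZR k + 1).
  { destruct (Req_dec (M * x) (IZR (zfloor (M * x)))) as [E|E].
    - exists 1, (zfloor (M * x) - 1)%Z. rewrite minus_IZR. lra.
    - exists (M * x - IZR (zfloor (M * x))), (zfloor (M * x)). lra. }
  destruct Hgap as [d [k [Hd Hk]]].
  exists (d / M), k. split; [apply Rdiv_lt_0_compat; lra|].
  intros x' Hx'. apply zfloor_unique.
  assert (Hlo : M * (x - d / M) < M * x') by (apply Rmult_lt_compat_l; lra).
  assert (Hhi : M * x' < M * x) by (apply Rmult_lt_compat_l; lra).
  replace (M * (x - d / M)) with (M * x - d) in Hlo by (field; lra).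
  lra.
Qed.

Lemma le_of_left_nbhd x b eps : 0 < eps ->
  (forall x', x - eps < x' < x -> x' < b) -> x <= b.
Proof.
  intros He H. destruct (Rle_dec x b) as [|Hgt]; [assumption|exfalso].
  assert (Hx' : x - eps < Rmax (x - eps / 2) ((x + b) / 2) < x)
    by (unfold Rmax; destruct (Rle_dec _ _); lra).
  specialize (H _ Hx'). unfold Rmax in H. destruct (Rle_dec _ _); lra.
Qed.

Lemma continuity_pt_near g x e : continuity_pt g x -> 0 < e ->
  exists d, 0 < d /\ forall x', Rabs (x' - x) < d -> Rabs (g x' - g x) < e.
Proof.
  intros H He. destruct (proj1 (continuity_pt_locally g x) H (mkposreal e He)) as [d Hd].
  exists d. split; [apply cond_pos|]. intros x' Hx'. apply Hd. exact Hx'.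
Qed.

Definition left_const (u : R -> Z) (x : R) (L : Z) : Prop :=
  exists eps, 0 < eps /\ forall x', x - eps < x' < x -> u x' = L.

Definition right_const (u : R -> Z) (x : R) : Prop :=
  exists eps, 0 < eps /\ forall x', x <= x' < x + eps -> u x' = u x.

Definition cadlag_unit_step (u : R -> Z) : Prop :=
  forall x, right_const u x /\ exists L, left_const u x L /\ (Z.abs (L - u x) <= 1)%Z.

Lemma cadlag_unit_step_map2 (op : Z -> Z -> Z) (u v : R -> Z) :
  (forall a b a' b', (Z.abs (a - a') <= 1)%Z -> (Z.abs (b - b') <= 1)%Z ->
     (Z.abs (op a b - op a' b') <= 1)%Z) ->
  cadlag_unit_step u -> cadlag_unit_step v -> cadlag_unit_step (fun x => op (u x) (v x)).
Proof.
  intros Hop Hu Hv x.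
  destruct (Hu x) as [[e1 [He1 Hr1]] [L1 [[d1 [Hd1 Hl1]] J1]]].
  destruct (Hv x) as [[e2 [He2 Hr2]] [L2 [[d2 [Hd2 Hl2]] J2]]].
  pose proof (Rmin_l e1 e2). pose proof (Rmin_r e1 e2).
  pose proof (Rmin_l d1 d2). pose proof (Rmin_r d1 d2).
  split.
  - exists (Rmin e1 e2). split; [now apply Rmin_glb_lt|].
    intros x' Hx'. rewrite Hr1, Hr2 by lra. reflexivity.
  - exists (op L1 L2). split; [|now apply Hop].
    exists (Rmin d1 d2). split; [now apply Rmin_glb_lt|].
    intros x' Hx'. rewrite Hl1, Hl2 by lra. reflexivity.
Qed.

(* Junk value if [u] is not constant on any left neighbourhood of [x]. *)
Definition left_lim (u : R -> Z) (x : R) : Z := epsilon (inhabits 0%Z) (left_const u x).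

Lemma left_const_unique u x L L' : left_const u x L -> left_const u x L' -> L = L'.
Proof.
  intros [e [He H]] [e' [He' H']].
  pose proof (Rmin_l e e'). pose proof (Rmin_r e e').
  assert (0 < Rmin e e') by now apply Rmin_glb_lt.
  rewrite <- (H (x - Rmin e e' / 2)) by lra. apply H'. lra.
Qed.

Lemma left_lim_eq u x L : left_const u x L -> left_lim u x = L.
Proof.
  intros H. apply (left_const_unique u x); [|exact H].
  unfold left_lim. apply epsilon_spec. now exists L.
Qed.

Definition usc_reg (u : R -> Z) (x : R) : Z := Z.max (left_lim u x) (u x).

Lemma usc_reg_around u x : cadlag_unit_step u ->
  exists eps, 0 < eps /\
    (forall x', x - eps < x' < x -> usc_reg u x' = left_lim u x) /\
    (forall x', x < x' < x + eps -> usc_reg u x' = u x) /\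
    (Z.abs (left_lim u x - u x) <= 1)%Z.
Proof.
  intros Hu. destruct (Hu x) as [[e1 [He1 Hr]] [L [HL J]]].
  rewrite (left_lim_eq u x L HL). destruct HL as [e2 [He2 Hl]].
  pose proof (Rmin_l e1 e2). pose proof (Rmin_r e1 e2).
  exists (Rmin e1 e2). split; [now apply Rmin_glb_lt|]. split; [|split; [|exact J]].
  - intros x' Hx'. assert (HL' : left_const u x' L).
    { exists (x' - (x - e2)). split; [lra|]. intros x'' Hx''. apply Hl. lra. }
    unfold usc_reg. rewrite (left_lim_eq u x' L HL'), (Hl x') by lra. lia.
  - intros x' Hx'. assert (HL' : left_const u x' (u x)).
    { exists (x' - x). split; [lra|]. intros x'' Hx''. apply Hr. lra. }
    unfold usc_reg. rewrite (left_lim_eq u x' (u x) HL'), (Hr x') by lra. lia.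
Qed.

Lemma usc_reg_row u : cadlag_unit_step u -> pw_const_unit_jumps (usc_reg u) /\ usc (usc_reg u).
Proof.
  intros Hu. split.
  - intros x. destruct (usc_reg_around u x Hu) as [eps [He [Hl [Hr J]]]].
    exists eps, (left_lim u x), (u x). unfold usc_reg at 3 4. repeat split; auto; lia.
  - intros x t Ht. destruct (usc_reg_around u x Hu) as [eps [He [Hl [Hr _]]]].
    exists eps. split; [exact He|]. intros x' Hx'. apply Rabs_lt_between' in Hx'.
    destruct (Rtotal_order x' x) as [H|[H|H]].
    + rewrite Hl by lra.
      assert (IZR (left_lim u x) <= IZR (usc_reg u x)) by (apply IZR_le; unfold usc_reg; lia).
      lra.
    + subst. exact Ht.
    + rewrite Hr by lra.
      assert (IZR (u x) <= IZR (usc_reg u x)) by (apply IZR_le; unfold usc_reg; lia).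
      lra.
Qed.

Lemma usc_reg_coupled u v x : cadlag_unit_step u -> cadlag_unit_step v ->
  (forall x', v x' - u x' = -1 \/ v x' - u x' = 0)%Z ->
  (usc_reg v x - usc_reg u x = -1 \/ usc_reg v x - usc_reg u x = 0)%Z.
Proof.
  intros Hu Hv Huv.
  destruct (Hu x) as [_ [Lu [HLu _]]]. destruct (Hv x) as [_ [Lv [HLv _]]].
  unfold usc_reg. rewrite (left_lim_eq u x Lu HLu), (left_lim_eq v x Lv HLv).
  destruct HLu as [e1 [He1 Hl1]], HLv as [e2 [He2 Hl2]].
  pose proof (Rmin_l e1 e2). pose proof (Rmin_r e1 e2).
  assert (0 < Rmin e1 e2) by now apply Rmin_glb_lt.
  pose proof (Huv (x - Rmin e1 e2 / 2)) as Hleft.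
  rewrite Hl1, Hl2 in Hleft by lra.
  pose proof (Huv x). lia.
Qed.

Lemma usc_reg_near u c x : cadlag_unit_step u ->
  (forall x', Rabs (IZR (u x') - c x') <= 1) -> continuity_pt c x ->
  Rabs (IZR (usc_reg u x) - c x) < 3 / 2.
Proof.
  intros Hu Hc Hcont. destruct (Hu x) as [_ [L [HL _]]].
  unfold usc_reg. rewrite (left_lim_eq u x L HL).
  assert (HLc : Rabs (IZR L - c x) < 3 / 2).
  { destruct HL as [e [He Hl]].
    destruct (continuity_pt_near c x (/ 2) Hcont) as [d [Hd Hcd]]; [lra|].
    pose proof (Rmin_l e d). pose proof (Rmin_r e d).
    assert (0 < Rmin e d) by now apply Rmin_glb_lt.
    set (x' := x - Rmin e d / 2).
    rewrite <- (Hl x') by (unfold x'; lra).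
    specialize (Hcd x'). specialize (Hc x').
    apply Rabs_le_between' in Hc. apply Rabs_lt_between'.
    assert (Hcx : Rabs (c x' - c x) < / 2) by (apply Hcd; unfold x'; apply Rabs_lt_between'; lra).
    apply Rabs_lt_between' in Hcx. lra. }
  pose proof (Hc x) as Hcx. apply Rabs_le_between' in Hcx.
  destruct (Z.max_spec L (u x)) as [[_ E]|[_ E]]; rewrite E; [|exact HLc].
  apply Rabs_lt_between'. lra.
Qed.

Lemma Gamma_usc_reg (h : Z -> R -> Z) :
  (forall k, cadlag_unit_step (h k)) ->
  (forall k x, (h (k + 1) x - h k x = -1 \/ h (k + 1) x - h k x = 0)%Z) ->
  Gamma (fun x y => usc_reg (h y) x).
Proof.
  intros Hstep Hcpl. split.
  - intros y. apply usc_reg_row, Hstep.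
  - intros x y. apply usc_reg_coupled; auto.
Qed.

Section Grid.

Variable g : R -> R.
Variable N : Z -> Z.
Hypothesis N_pos : forall j, (0 < N j)%Z.
Hypothesis N_mesh : forall j a b, IZR j <= a <= IZR j + 1 -> IZR j <= b <= IZR j + 1 ->
  Rabs (a - b) <= / IZR (N j) -> Rabs (g a - g b) <= / 2.

Definition grid_point (x : R) : R :=
  IZR (zfloor (IZR (N (zfloor x)) * x)) / IZR (N (zfloor x)).

Lemma grid_point_cell x :
  IZR (zfloor x) <= grid_point x <= x /\
  x < grid_point x + / IZR (N (zfloor x)) <= IZR (zfloor x) + 1.
Proof.
  set (J := zfloor x). set (M := IZR (N J)). set (m := zfloor (M * x)).
  assert (HM : 0 < M) by (apply IZR_lt, N_pos).
  destruct (zfloor_spec x) as [Hx1 Hx2]. destruct (zfloor_spec (M * x)) as [Hm1 Hm2].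
  fold J in Hx1, Hx2. fold m in Hm1, Hm2.
  assert (Hlo : (N J * J <= m)%Z).
  { rewrite <- (zfloor_IZR (N J * J)). apply zfloor_le. rewrite mult_IZR. fold M. nra. }
  assert (Hhi : (m + 1 <= N J * (J + 1))%Z).
  { cut (m < N J * (J + 1))%Z; [lia|].
    apply lt_IZR. rewrite mult_IZR, plus_IZR. fold M. nra. }
  apply IZR_le in Hlo, Hhi. rewrite mult_IZR in Hlo. rewrite plus_IZR, mult_IZR, plus_IZR in Hhi.
  fold M in Hlo, Hhi.
  assert (Hs : grid_point x * M = IZR m) by (change (IZR m / M * M = IZR m); field; lra).
  assert (HMinv : M * / M = 1) by (field; lra).
  split; split; nra.
Qed.

Lemma grid_point_near x : Rabs (g (grid_point x) - g x) <= / 2.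
Proof.
  destruct (grid_point_cell x) as [[H1 H2] [H3 H4]].
  apply (N_mesh (zfloor x)); try lra. apply Rabs_le_between'. lra.
Qed.

Lemma grid_point_right x :
  exists eps, 0 < eps /\ forall x', x <= x' < x + eps -> grid_point x' = grid_point x.
Proof.
  assert (HM : 0 < IZR (N (zfloor x))) by (apply IZR_lt, N_pos).
  destruct (zfloor_scaled_right 1 x) as [e1 [He1 H1]]; [lra|].
  destruct (zfloor_scaled_right _ x HM) as [e2 [He2 H2]].
  pose proof (Rmin_l e1 e2). pose proof (Rmin_r e1 e2).
  exists (Rmin e1 e2). split; [now apply Rmin_glb_lt|].
  intros x' Hx'. assert (EJ : zfloor x' = zfloor x).
  { rewrite <- (Rmult_1_l x'), <- (Rmult_1_l x). apply H1. lra. }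
  unfold grid_point. rewrite EJ, H2 by lra. reflexivity.
Qed.

Lemma grid_point_left x : exists eps p,
  0 < eps /\ (forall x', x - eps < x' < x -> grid_point x' = p) /\ Rabs (g p - g x) <= / 2.
Proof.
  destruct (zfloor_scaled_left 1 x) as [e1 [J [He1 H1]]]; [lra|].
  assert (HM : 0 < IZR (N J)) by (apply IZR_lt, N_pos).
  destruct (zfloor_scaled_left _ x HM) as [e2 [m [He2 H2]]].
  pose proof (Rmin_l e1 e2). pose proof (Rmin_r e1 e2).
  assert (Heps : 0 < Rmin e1 e2) by now apply Rmin_glb_lt.
  assert (EJ : forall x', x - Rmin e1 e2 < x' < x -> zfloor x' = J).
  { intros x' Hx'. rewrite <- (Rmult_1_l x'). apply H1. lra. }
  assert (Hp : forall x', x - Rmin e1 e2 < x' < x -> grid_point x' = IZR m / IZR (N J)).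
  { intros x' Hx'. unfold grid_point. rewrite (EJ x'), H2 by lra. reflexivity. }
  exists (Rmin e1 e2), (IZR m / IZR (N J)). split; [exact Heps|]. split; [exact Hp|].
  assert (Hcell : forall x', x - Rmin e1 e2 < x' < x ->
    IZR J <= IZR m / IZR (N J) <= x' /\ x' < IZR m / IZR (N J) + / IZR (N J) <= IZR J + 1).
  { intros x' Hx'. rewrite <- (Hp x' Hx'), <- (EJ x' Hx'). apply grid_point_cell. }
  destruct (Hcell (x - Rmin e1 e2 / 2)) as [[C1 C2] [C3 C4]]; [lra|].
  assert (Hx : x <= IZR m / IZR (N J) + / IZR (N J)).
  { apply (le_of_left_nbhd x _ (Rmin e1 e2) Heps). intros x' Hx'. apply Hcell, Hx'. }
  apply (N_mesh J); try lra. apply Rabs_le_between'. lra.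
Qed.

Definition grid_floor (x : R) : Z := zfloor (g (grid_point x) + / 2).

Lemma grid_floor_step : cadlag_unit_step grid_floor.
Proof.
  intros x. split.
  - destruct (grid_point_right x) as [eps [He H]].
    exists eps. split; [exact He|].
    intros x' Hx'. unfold grid_floor. rewrite H by exact Hx'. reflexivity.
  - destruct (grid_point_left x) as [eps [p [He [H Hp]]]].
    exists (zfloor (g p + / 2)). split.
    + exists eps. split; [exact He|].
      intros x' Hx'. unfold grid_floor. rewrite H by exact Hx'. reflexivity.
    + apply zfloor_unit_gap. pose proof (grid_point_near x) as Hx.
      apply Rabs_le_between' in Hp, Hx. apply Rabs_le_between'. lra.
Qed.

Lemma grid_floor_near x : Rabs (IZR (grid_floor x) - g x) <= 1.
Proof.
  unfold grid_floor. pose proof (zfloor_spec (g (grid_point x) + / 2)).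
  pose proof (grid_point_near x) as H'. apply Rabs_le_between' in H'.
  apply Rabs_le_between'. lra.
Qed.

End Grid.

Lemma uniform_mesh g j : (forall x, continuity_pt g x) ->
  exists N, (0 < N)%Z /\ forall a b, IZR j <= a <= IZR j + 1 -> IZR j <= b <= IZR j + 1 ->
    Rabs (a - b) <= / IZR N -> Rabs (g a - g b) <= / 2.
Proof.
  intros Hg.
  destruct (Heine g (fun c => IZR j <= c <= IZR j + 1) (compact_P3 _ _) (fun x _ => Hg x)
    (mkposreal (/ 2) ltac:(lra))) as [d Hd].
  pose proof (cond_pos d) as Hd0. destruct (archimed (/ d)) as [Hup _].
  assert (Hinv : 0 < / d) by now apply Rinv_0_lt_compat.
  assert (Hdd : d * / d = 1) by (field; lra).
  exists (up (/ d)). split; [apply lt_IZR; simpl; lra|].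
  intros a b Ha Hb Hab. left. apply Hd; auto.
  apply Rle_lt_trans with (1 := Hab).
  apply Rmult_lt_reg_l with (IZR (up (/ d))); [lra|]. rewrite Rinv_r by lra. nra.
Qed.

Lemma step_approx g : (forall x, continuity_pt g x) ->
  exists u, cadlag_unit_step u /\ forall x, Rabs (IZR (u x) - g x) <= 1.
Proof.
  intros Hg. destruct (choice _ (fun j => uniform_mesh g j Hg)) as [N HN].
  exists (grid_floor g N). split.
  - apply grid_floor_step; apply HN.
  - apply grid_floor_near; apply HN.
Qed.

Lemma Z_bidirectional_ind (P : Z -> Prop) :
  P 0%Z ->
  (forall k, (0 <= k)%Z -> P k -> P (k + 1)%Z) ->
  (forall k, (k < 0)%Z -> P (k + 1)%Z -> P k) ->
  forall k, P k.
Proof.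
  intros H0 Hup Hdown k. destruct (Z.le_gt_cases 0 k) as [Hk|Hk].
  - revert k Hk. apply natlike_ind; [exact H0|]. intros k Hk. apply Hup, Hk.
  - replace k with (- (- k))%Z by lia. assert (Hk' : (0 <= - k)%Z) by lia.
    revert Hk'. generalize (- k)%Z. apply natlike_ind; [exact H0|].
    intros j Hj IH. apply Hdown; [lia|]. now replace (- Z.succ j + 1)%Z with (- j)%Z by lia.
Qed.

Definition clamp (lo hi v : Z) : Z := Z.max lo (Z.min v hi).

Lemma clamp_near lo hi v c : (lo <= hi)%Z ->
  Rabs (IZR v - c) <= 1 -> c - 1 <= IZR hi -> IZR lo <= c + 1 ->
  Rabs (IZR (clamp lo hi v) - c) <= 1.
Proof.
  intros Hlh Hv Hhi Hlo. apply Rabs_le_between' in Hv. apply Rabs_le_between'.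
  assert (Hcases : clamp lo hi v = v \/ (clamp lo hi v = hi /\ (hi < v)%Z) \/
                   (clamp lo hi v = lo /\ (v < lo)%Z)) by (unfold clamp; lia).
  destruct Hcases as [E|[[E H]|[E H]]]; rewrite E; [lra| |]; apply IZR_lt in H; lra.
Qed.

Section Chain.

Variable a : Z -> R -> Z.

Fixpoint chain_up (m : nat) (x : R) : Z :=
  match m with
  | O => a 0%Z x
  | S m' => clamp (chain_up m' x - 1) (chain_up m' x) (a (Z.of_nat m) x)
  end.

Fixpoint chain_down (m : nat) (x : R) : Z :=
  match m with
  | O => a 0%Z x
  | S m' => clamp (chain_down m' x) (chain_down m' x + 1) (a (- Z.of_nat m) x)
  end.

Definition chain (k : Z) : R -> Z :=
  if (0 <=? k)%Z then chain_up (Z.to_nat k) else chain_down (Z.to_nat (- k)).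

Lemma chain_0 : chain 0 = a 0.
Proof. reflexivity. Qed.

Lemma chain_succ k : (0 <= k)%Z ->
  chain (k + 1) = fun x => clamp (chain k x - 1) (chain k x) (a (k + 1) x).
Proof.
  intros Hk. unfold chain.
  replace (0 <=? k + 1)%Z with true by (symmetry; apply Z.leb_le; lia).
  replace (0 <=? k)%Z with true by (symmetry; apply Z.leb_le; lia).
  replace (Z.to_nat (k + 1)) with (S (Z.to_nat k)) by lia.
  extensionality x. cbn [chain_up]. now replace (Z.of_nat (S (Z.to_nat k))) with (k + 1)%Z by lia.
Qed.

Lemma chain_pred k : (k < 0)%Z ->
  chain k = fun x => clamp (chain (k + 1) x) (chain (k + 1) x + 1) (a k x).
Proof.
  intros Hk. unfold chain.
  replace (0 <=? k)%Z with false by (symmetry; apply Z.leb_gt; lia).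
  replace (Z.to_nat (- k)) with (S (Z.to_nat (- (k + 1)))) by lia.
  extensionality x. cbn [chain_down].
  replace (- Z.of_nat (S (Z.to_nat (- (k + 1)))))%Z with k by lia.
  destruct (Z.eq_dec k (-1)) as [->|Hk1]; [reflexivity|].
  now replace (0 <=? k + 1)%Z with false by (symmetry; apply Z.leb_gt; lia).
Qed.

Lemma chain_step : (forall k, cadlag_unit_step (a k)) -> forall k, cadlag_unit_step (chain k).
Proof.
  intros Ha. apply Z_bidirectional_ind.
  - rewrite chain_0. apply Ha.
  - intros k Hk IH. rewrite (chain_succ k Hk).
    apply (cadlag_unit_step_map2 (fun p v => clamp (p - 1) p v)); [|exact IH|apply Ha].
    intros; unfold clamp; lia.
  - intros k Hk IH. rewrite (chain_pred k Hk).
    apply (cadlag_unit_step_map2 (fun p v => clamp p (p + 1) v)); [|exact IH|apply Ha].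
    intros; unfold clamp; lia.
Qed.

Lemma chain_coupled k x : (chain (k + 1) x - chain k x = -1 \/ chain (k + 1) x - chain k x = 0)%Z.
Proof.
  destruct (Z.le_gt_cases 0 k) as [Hk|Hk].
  - rewrite (chain_succ k Hk). unfold clamp. lia.
  - rewrite (chain_pred k Hk). unfold clamp. lia.
Qed.

Lemma chain_near (c : Z -> R -> R) :
  (forall k x, Rabs (IZR (a k x) - c k x) <= 1) ->
  (forall k x, c k x - 1 <= c (k + 1)%Z x <= c k x) ->
  forall k x, Rabs (IZR (chain k x) - c k x) <= 1.
Proof.
  intros Ha Hc.
  apply (Z_bidirectional_ind (fun k => forall x, Rabs (IZR (chain k x) - c k x) <= 1)).
  - exact (Ha 0%Z).
  - intros k Hk IH x. rewrite (chain_succ k Hk).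
    specialize (IH x). specialize (Hc k x). apply Rabs_le_between' in IH.
    apply clamp_near; [lia|apply Ha| |rewrite minus_IZR; simpl]; lra.
  - intros k Hk IH x. rewrite (chain_pred k Hk).
    specialize (IH x). specialize (Hc k x). apply Rabs_le_between' in IH.
    apply clamp_near; [lia|apply Ha|rewrite plus_IZR; simpl|]; lra.
Qed.

End Chain.

(* [n f(x, y)] lies in [(n f(x, k/n) - 1, n f(x, k/n)]] for [k = floor (n y)]; the
   shift by [1/2] centres that interval. *)
Definition row_center (n : nat) (f : R -> R -> R) (k : Z) (x : R) : R :=
  INR n * f (x / INR n) (IZR k / INR n) - / 2.

Section Rows.

Variable n : nat.
Hypothesis n_pos : (1 <= n)%nat.
Variable f : R -> R -> R.
Hypothesis f_Gammabar : Gammabar f.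

Let INR_n_pos : 0 < INR n.
Proof. apply lt_0_INR. lia. Qed.

Lemma row_center_continuous k x : continuity_pt (row_center n f k) x.
Proof.
  apply continuity_pt_locally. intros eps.
  destruct f_Gammabar as [Hcont _].
  assert (He : 0 < eps / INR n) by (apply Rdiv_lt_0_compat; [apply cond_pos|lra]).
  destruct (Hcont (x / INR n) (IZR k / INR n) (mkposreal _ He)) as [d Hd].
  assert (Hd' : 0 < d * INR n) by (apply Rmult_lt_0_compat; [apply cond_pos|lra]).
  exists (mkposreal _ Hd'). intros x' Hx'. change (Rabs (x' - x) < d * INR n) in Hx'.
  unfold row_center.
  replace (INR n * f (x' / INR n) (IZR k / INR n) - / 2
           - (INR n * f (x / INR n) (IZR k / INR n) - / 2))
    with (INR n * (f (x' / INR n) (IZR k / INR n) - f (x / INR n) (IZR k / INR n))) by ring.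
  rewrite Rabs_mult, Rabs_pos_eq by lra.
  replace (pos eps) with (INR n * (eps / INR n)) by (field; lra).
  apply Rmult_lt_compat_l; [lra|]. apply Hd; simpl.
  - replace (x' / INR n - x / INR n) with ((x' - x) / INR n) by (field; lra).
    unfold Rdiv. rewrite Rabs_mult, (Rabs_pos_eq (/ INR n)) by (left; now apply Rinv_0_lt_compat).
    apply Rmult_lt_reg_r with (INR n); [lra|]. rewrite Rmult_assoc, Rinv_l; lra.
  - unfold Rminus. rewrite Rplus_opp_r, Rabs_R0. apply cond_pos.
Qed.

Lemma row_center_coupled k x :
  row_center n f k x - 1 <= row_center n f (k + 1) x <= row_center n f k x.
Proof.
  destruct f_Gammabar as [_ Hmono]. unfold row_center.
  destruct (Hmono (x / INR n) (IZR k / INR n) (IZR (k + 1) / INR n)) as [H1 H2].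
  { rewrite plus_IZR. apply Rmult_le_compat_r; [left; now apply Rinv_0_lt_compat|lra]. }
  replace (IZR (k + 1) / INR n - IZR k / INR n) with (/ INR n) in H1
    by (rewrite plus_IZR; field; lra).
  assert (Hinv : INR n * / INR n = 1) by (field; lra).
  split; nra.
Qed.

Lemma row_center_near x y :
  Rabs (INR n * f x y - row_center n f (zfloor (INR n * y)) (INR n * x)) <= / 2.
Proof.
  destruct f_Gammabar as [_ Hmono]. unfold row_center.
  set (k := zfloor (INR n * y)). destruct (zfloor_spec (INR n * y)) as [K1 K2]. fold k in K1, K2.
  replace (INR n * x / INR n) with x by (field; lra).
  assert (Hk : IZR k / INR n <= y).
  { apply Rmult_le_reg_l with (INR n); [lra|].
    replace (INR n * (IZR k / INR n)) with (IZR k) by (field; lra). lra. }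
  destruct (Hmono x _ _ Hk) as [M1 M2].
  assert (Hgap : INR n * (y - IZR k / INR n) < 1)
    by (replace (INR n * (y - IZR k / INR n)) with (INR n * y - IZR k) by (field; lra); lra).
  apply Rabs_le_between'. split; nra.
Qed.

End Rows.

Definition within_2_over_n (n : nat) (f : R -> R -> R) (h : R -> Z -> Z) : Prop :=
  forall x y : R,
    Rabs (/ INR n * IZR (h (INR n * x) (zfloor (INR n * y))) - f x y) <= 2 / INR n.

Lemma Gammabar_approx n f : (1 <= n)%nat -> Gammabar f ->
  exists h, Gamma h /\ within_2_over_n n f h.
Proof.
  intros Hn Hf. assert (HN : 0 < INR n) by (apply lt_0_INR; lia).
  destruct (choice _ (fun k => step_approx _ (row_center_continuous n Hn f Hf k)))
    as [a Ha].
  exists (fun x y => usc_reg (chain a y) x). split.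
  - apply Gamma_usc_reg; [apply chain_step|apply chain_coupled]. intros k. apply Ha.
  - intros x y. set (k := zfloor (INR n * y)).
    assert (Hh := usc_reg_near (chain a k) (row_center n f k) (INR n * x)
      (chain_step a (fun k => proj1 (Ha k)) k)
      (chain_near a _ (fun k => proj2 (Ha k)) (row_center_coupled n Hn f Hf) k)
      (row_center_continuous n Hn f Hf k (INR n * x))).
    assert (Hr := row_center_near n Hn f Hf x y). fold k in Hr.
    apply Rabs_lt_between' in Hh. apply Rabs_le_between' in Hr.
    replace (/ INR n * IZR (usc_reg (chain a k) (INR n * x)) - f x y)
      with (/ INR n * (IZR (usc_reg (chain a k) (INR n * x)) - INR n * f x y)) by (field; lra).
    rewrite Rabs_mult, Rabs_pos_eq by (left; now apply Rinv_0_lt_compat).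
    unfold Rdiv. rewrite Rmult_comm. apply Rmult_le_compat_r; [left; now apply Rinv_0_lt_compat|].
    apply Rabs_le_between'. lra.
Qed.

Lemma Gammabar_sub_const f c : Gammabar f -> Gammabar (fun u v => f u v - c).
Proof.
  intros [Hc Hm]. split.
  - intros x y eps. destruct (Hc x y eps) as [d Hd]. exists d. intros u v Hu Hv.
    replace (f u v - c - (f x y - c)) with (f u v - f x y) by ring. auto.
  - intros x y1 y2 H. replace (f x y2 - c - (f x y1 - c)) with (f x y2 - f x y1) by ring. auto.
Qed.

Lemma Gamma_add_const h K : Gamma h -> Gamma (fun x y => (h x y + K)%Z).
Proof.
  intros [Hrow Hcpl]. split.
  - intros y. destruct (Hrow y) as [Hpw Husc]. split.
    + intros x. destruct (Hpw x) as [eps [L [Rv [He [HL [HR [J V]]]]]]].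
      exists eps, (L + K)%Z, (Rv + K)%Z. repeat split; auto.
      * intros x' Hx'. now rewrite HL.
      * intros x' Hx'. now rewrite HR.
      * lia.
      * simpl. lia.
    + intros x t Ht. rewrite plus_IZR in Ht.
      destruct (Husc x (t - IZR K)) as [d [Hd Hx]]; [lra|].
      exists d. split; [exact Hd|]. intros x' Hx'. specialize (Hx x' Hx'). rewrite plus_IZR. lra.
  - intros x y. specialize (Hcpl x y). lia.
Qed.

Definition level (n : nat) (f : R -> R -> R) : Z := zfloor (INR n * f 0 0).

Definition normalize (n : nat) (f : R -> R -> R) (u v : R) : R :=
  f u v - IZR (level n f) / INR n.

Definition approx (n : nat) (f : R -> R -> R) : R -> Z -> Z :=
  epsilon (inhabits (fun _ _ => 0%Z)) (fun h => Gamma h /\ within_2_over_n n f h).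

Definition discretize (n : nat) (f : R -> R -> R) (x : R) (y : Z) : Z :=
  (approx n (normalize n f) x y + level n f)%Z.

Lemma approx_spec n f : (1 <= n)%nat -> Gammabar f ->
  Gamma (approx n f) /\ within_2_over_n n f (approx n f).
Proof. intros Hn Hf. unfold approx. apply epsilon_spec, Gammabar_approx; assumption. Qed.

Lemma discretize_Gamma n f : (1 <= n)%nat -> Gammabar f -> Gamma (discretize n f).
Proof. intros Hn Hf. apply Gamma_add_const, approx_spec, Gammabar_sub_const, Hf. exact Hn. Qed.

Lemma discretize_shift n f J x y : (1 <= n)%nat ->
  discretize n (fun u v => f u v + IZR J / INR n) x y = (discretize n f x y + J)%Z.
Proof.
  intros Hn. assert (HN : 0 < INR n) by (apply lt_0_INR; lia).
  assert (Hlevel : level n (fun u v => f u v + IZR J / INR n) = (level n f + J)%Z).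
  { unfold level. rewrite <- zfloor_add_IZR. f_equal. field. lra. }
  assert (Hnorm : normalize n (fun u v => f u v + IZR J / INR n) = normalize n f).
  { unfold normalize. rewrite Hlevel. extensionality u. extensionality v.
    rewrite plus_IZR. field. lra. }
  unfold discretize. rewrite Hlevel, Hnorm. lia.
Qed.

Lemma discretize_within n f : (1 <= n)%nat -> Gammabar f ->
  within_2_over_n n f (discretize n f).
Proof.
  intros Hn Hf x y. assert (HN : 0 < INR n) by (apply lt_0_INR; lia).
  destruct (approx_spec n (normalize n f) Hn (Gammabar_sub_const f _ Hf)) as [_ Hb].
  specialize (Hb x y). unfold discretize. rewrite plus_IZR.
  replace (/ INR n * (IZR (approx n (normalize n f) (INR n * x) (zfloor (INR n * y)))
                      + IZR (level n f)) - f x y)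
    with (/ INR n * IZR (approx n (normalize n f) (INR n * x) (zfloor (INR n * y)))
          - normalize n f x y)
    by (unfold normalize; field; lra).
  exact Hb.
Qed.

Theorem proposition4p10 :
  forall n : nat, (1 <= n)%nat ->
  exists phi : (R -> R -> R) -> (R -> Z -> Z),
    (forall f, Gammabar f -> Gamma (phi f)) /\
    (forall (c : R) (f : R -> R -> R), Gammabar f ->
       forall (x : R) (y : Z),
         phi (fun u v => f u v + IZR (zfloor (INR n * c)) / INR n) x y
         = (phi f x y + zfloor (INR n * c))%Z) /\
    (forall f, Gammabar f ->
       forall x y : R,
         Rabs (/ INR n * IZR (phi f (INR n * x) (zfloor (INR n * y))) - f x y)
         <= 2 / INR n).
Proof.
  intros n Hn. exists (discretize n). split; [|split].
  - intros f Hf. exact (discretize_Gamma n f Hn Hf).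
  - intros c f _ x y. exact (discretize_shift n f _ x y Hn).
  - intros f Hf. exact (discretize_within n f Hn Hf).
Qed.
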